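(* For all integers $n,m\ge 2$, \[ \min\{n,m\}+2\le \gamma_{2t}(K_n\Box K_m)\le 2\min\{n,m\}. \]
   Context: All graphs are finite, simple and undirected. For a graph $G=(V,E)$, a set $S\subseteq V$ is a total $2$-dominating set if every vertex of $V$ (including those in $S$) is adjacent to at least $2$ vertices of $S$. The total $2$-domination number $\gamma_{2t}(G)$ is the minimum cardinality of a total $2$-dominating set of $G$. The Cartesian product $G\Box H$ has vertex set $V(G)\times V(H)$, with $(u_1,v_1)\sim(u_2,v_2)$ iff either $u_1=u_2$ and $v_1\sim v_2$ in $H$, or $v_1=v_2$ and $u_1\sim u_2$ in $G$. $K_n$ is the complete graph on $n$ vertices. *)

From mathcomp Require Import all_boot.
Set Implicit Arguments. Unset Strict Implicit. Unset Printing Implicit Defensive.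

Definition simple_graph (T : finType) (e : rel T) : Prop :=
  symmetric e /\ irreflexive e.

Definition total2dom (T : finType) (e : rel T) (S : {set T}) : bool :=
  [forall v, 2 <= #|[set u in S | e v u]|].

(* Total 2-domination number: minimum cardinality of a total 2-dominating set
   (the default #|T| is only reached when no such set exists; whenever one
   exists, the full vertex set is one and the value is the true minimum). *)
Definition gamma2t (T : finType) (e : rel T) : nat :=
  \big[minn/#|T|]_(S : {set T} | total2dom e S) #|S|.

Definition K_rel (n : nat) : rel 'I_n := fun i j => i != j.

Definition cart_rel (T U : finType) (e : rel T) (f : rel U) : rel (T * U) :=
  fun x y => ((x.1 == y.1) && f x.2 y.2) || ((x.2 == y.2) && e x.1 y.1).

From mathcomp Require Import all_boot.
From mathcomp Require Import zify.

Set Implicit Arguments. Unset Strict Implicit. Unset Printing Implicit Defensive.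

(* Lower bound, valid for any Cartesian product T x U of loopless graphs: the
   S-neighbours of v = (i, j) lie in (row i of S) ∪ (column j of S) minus v, so
   2 + 2[v ∈ S] <= |row i| + |col j|.  Summing over the columns j gives
   2|U| + 2r <= |U| r + |S| for a row with r elements; hence a row with r <= 1
   elements forces |S| >= |U| + 2, and otherwise every row has at least 2
   elements and |S| >= 2|T|.
   Upper bound: two full columns (or, by transposition, two full rows) form a
   total 2-dominating set. *)

Lemma cardsI1 (T : finType) (A : {set T}) x : #|A :&: [set x]| = (x \in A).
Proof.
have [xA | xNA] := boolP (x \in A).
  by rewrite (setIidPr _) ?sub1set ?cards1.
have /eqP -> : A :&: [set x] == set0 by rewrite setI_eq0 disjoint_sym disjoints1.
by rewrite cards0.
Qed.

Lemma gamma2t_min (T : finType) (e : rel T) (S : {set T}) :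
  total2dom e S -> gamma2t e <= #|S|.
Proof.
move=> domS; rewrite /gamma2t; elim: (index_enum _) (mem_index_enum S) => //.
move=> S' r IH; rewrite inE big_cons => /orP[/eqP <- | S_r].
  by rewrite domS geq_minl.
by case: ifP => _; [apply: leq_trans (geq_minr _ _) _ |]; exact: IH.
Qed.

Lemma gamma2t_ge (T : finType) (e : rel T) k :
  k <= #|T| -> (forall S, total2dom e S -> k <= #|S|) -> k <= gamma2t e.
Proof.
move=> kT kS; rewrite /gamma2t.
by apply: (big_ind (fun x => k <= x)) => // x y kx ky; rewrite leq_min kx ky.
Qed.

Lemma total2dom_imset (T U : finType) (e : rel T) (e' : rel U)
    (f : T -> U) (g : U -> T) (S : {set T}) :
  cancel f g -> cancel g f -> {mono f : x y / e x y >-> e' x y} ->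
  total2dom e S -> total2dom e' (f @: S).
Proof.
move=> fK gK f_mono /forallP domS; apply/forallP => v.
apply: leq_trans (domS (g v)) _.
rewrite -(card_imset _ (can_inj fK)); apply/subset_leq_card/subsetP => w.
case/imsetP => u; rewrite inE => /andP[uS e_gv_u] ->.
by rewrite inE imset_f //= -{1}[v]gK f_mono.
Qed.

Section CartesianProduct.

Variables (T U : finType) (e : rel T) (f : rel U).

Definition row_of (S : {set T * U}) i := [set u in S | u.1 == i].
Definition col_of (S : {set T * U}) j := [set u in S | u.2 == j].

Lemma card_sum_rows (S : {set T * U}) : #|S| = \sum_i #|row_of S i|.
Proof.
rewrite -sum1_card (partition_big (fun u => u.1) xpredT) //=.
by apply: eq_bigr => i _; rewrite -sum1_card; apply: eq_bigl => u; rewrite inE.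
Qed.

Lemma card_sum_cols (S : {set T * U}) : #|S| = \sum_j #|col_of S j|.
Proof.
rewrite -sum1_card (partition_big (fun u => u.2) xpredT) //=.
by apply: eq_bigr => j _; rewrite -sum1_card; apply: eq_bigl => u; rewrite inE.
Qed.

Lemma card_row_col_I (S : {set T * U}) i j :
  #|row_of S i :&: col_of S j| = ((i, j) \in S).
Proof.
rewrite -(cardsI1 S (i, j)); apply: eq_card => -[x y].
by rewrite !inE xpair_eqE; case: (_ \in S).
Qed.

Lemma card_row_of_sum_cols (S : {set T * U}) i :
  #|row_of S i| = \sum_j ((i, j) \in S).
Proof.
rewrite card_sum_cols; apply: eq_bigr => j _; rewrite -card_row_col_I.
by apply: eq_card => u; rewrite !inE -!andbA; case: (u \in S).
Qed.

Hypotheses (e_irr : irreflexive e) (f_irr : irreflexive f).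

Lemma cart_nbhd_sub (S : {set T * U}) v :
  [set u in S | cart_rel e f v u] \subset
  (row_of S v.1 :|: col_of S v.2) :\ v.
Proof.
apply/subsetP => u; rewrite !inE => /andP[uS].
case/orP => /andP[/eqP same adj]; rewrite uS eq_sym ?same eqxx /= ?orbT ?andbT;
  apply: contraTneq _ adj => ->; [by rewrite f_irr | by rewrite e_irr].
Qed.

Lemma nbhd_card_le_row_col (S : {set T * U}) v :
  #|[set u in S | cart_rel e f v u]| + 2 * (v \in S) <=
  #|row_of S v.1| + #|col_of S v.2|.
Proof.
have card_I : #|row_of S v.1 :&: col_of S v.2| = (v \in S).
  by rewrite card_row_col_I -surjective_pairing.
have v_RC : (v \in row_of S v.1 :|: col_of S v.2) = (v \in S).
  by rewrite !inE !eqxx !andbT orbb.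
rewrite -cardsUI card_I (cardsD1 v (_ :|: _)) v_RC addnAC addnn -mul2n.
by rewrite addnC leq_add2l subset_leq_card ?cart_nbhd_sub.
Qed.

Lemma total2dom_row_bound (S : {set T * U}) i :
  total2dom (cart_rel e f) S ->
  2 * #|U| + 2 * #|row_of S i| <= #|U| * #|row_of S i| + #|S|.
Proof.
move=> /forallP domS.
have per_col j : 2 + 2 * ((i, j) \in S) <= #|row_of S i| + #|col_of S j|.
  exact: leq_trans (leq_add (domS (i, j)) (leqnn _))
                   (nbhd_card_le_row_col S (i, j)).
have : \sum_j (2 + 2 * ((i, j) \in S)) <= \sum_j (#|row_of S i| + #|col_of S j|).
  by apply: leq_sum => j _; exact: per_col.
rewrite big_split -big_distrr -card_row_of_sum_cols big_split -card_sum_cols.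
by rewrite !sum_nat_const mulnC.
Qed.

Lemma total2dom_cart_card (S : {set T * U}) :
  2 <= #|T| -> 2 <= #|U| -> total2dom (cart_rel e f) S ->
  minn #|T| #|U| + 2 <= #|S|.
Proof.
move=> T2 U2 domS.
case: [exists i, #|row_of S i| <= 1] / existsP => [[i small_row] | big_rows].
  move: small_row (total2dom_row_bound i domS).
  by case: #|row_of S i| => [|[|//]] _; rewrite ?muln0 ?muln1; lia.
have : \sum_(i : T) 2 <= #|S|.
  rewrite card_sum_rows; apply: leq_sum => i _.
  by rewrite ltnNge; apply/negP => small; apply: big_rows; exists i.
rewrite sum_nat_const => twice_rows.
have : #|T| * 2 <= #|S| := twice_rows.
lia.
Qed.

End CartesianProduct.

Lemma total2dom_two_cols (T : finType) (e : rel T) m (B : {set 'I_m}) :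
  (forall x, exists y, e x y) -> #|B| = 2 ->
  total2dom (cart_rel e (@K_rel m)) (setX [set: T] B).
Proof.
move=> no_isolated /eqP/cards2P[b1 [b2 [b12 ->]]].
apply/forallP => -[i j]; apply/card_gt1P.
have [i' ii'] := no_isolated i.
have [b12F b21F] : (b1 == b2) = false /\ (b2 == b1) = false.
  by split; apply/negbTE; rewrite // eq_sym.
case: (j =P b1) => [-> | /eqP jb1].
  exists (i, b2), (i', b1); rewrite !inE /cart_rel /K_rel /= xpair_eqE !eqxx.
  by rewrite b12F b21F ii' /= ?orbT ?andbF; split.
case: (j =P b2) => [-> | /eqP jb2].
  exists (i, b1), (i', b2); rewrite !inE /cart_rel /K_rel /= xpair_eqE !eqxx.
  by rewrite b12F b21F ii' /= ?orbT ?andbF; split.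
exists (i, b1), (i, b2); rewrite !inE /cart_rel /K_rel /= xpair_eqE !eqxx.
by rewrite b12F (negbTE jb1) (negbTE jb2) /= ?andbF orbT; split.
Qed.

Lemma total2dom_cart_swap (T U : finType) (e : rel T) (f : rel U)
    (S : {set T * U}) :
  total2dom (cart_rel e f) S -> total2dom (cart_rel f e) (swap_pair @: S).
Proof.
apply: total2dom_imset swap_pairK swap_pairK _.
by move=> x y; rewrite /cart_rel orbC.
Qed.

Lemma gamma2t_cart_K_le (T : finType) (e : rel T) m :
  (forall x, exists y, e x y) -> 2 <= m ->
  gamma2t (cart_rel e (@K_rel m)) <= 2 * #|T|.
Proof.
move=> no_isolated m2.
have B2 : #|[set Ordinal (ltnW m2); Ordinal m2]| = 2 by rewrite cards2.
have := gamma2t_min (total2dom_two_cols no_isolated B2).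
by rewrite cardsX cardsT B2 mulnC.
Qed.

Lemma gamma2t_K_cart_le (U : finType) (f : rel U) n :
  (forall y, exists x, f y x) -> 2 <= n ->
  gamma2t (cart_rel (@K_rel n) f) <= 2 * #|U|.
Proof.
move=> no_isolated n2.
have B2 : #|[set Ordinal (ltnW n2); Ordinal n2]| = 2 by rewrite cards2.
have := gamma2t_min (total2dom_cart_swap (total2dom_two_cols no_isolated B2)).
by rewrite (card_imset _ (can_inj swap_pairK)) cardsX cardsT B2 mulnC.
Qed.

Lemma K_rel_no_isolated n : 2 <= n -> forall x : 'I_n, exists y, K_rel x y.
Proof.
move=> n2 x; have [-> | x_ne0] := eqVneq x (Ordinal (ltnW n2)).
  by exists (Ordinal n2).
by exists (Ordinal (ltnW n2)).
Qed.

Theorem lemma1 (n m : nat) (hn : 2 <= n) (hm : 2 <= m) :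
  minn n m + 2 <= gamma2t (cart_rel (@K_rel n) (@K_rel m)) <= 2 * minn n m.
Proof.
have K_irr k : irreflexive (@K_rel k) by move=> x; rewrite /K_rel eqxx.
apply/andP; split.
  apply: gamma2t_ge => [| S domS].
    by rewrite card_prod !card_ord; nia.
  by have := total2dom_cart_card (K_irr n) (K_irr m); rewrite !card_ord; apply.
have := gamma2t_cart_K_le (K_rel_no_isolated hn) hm.
have := gamma2t_K_cart_le (K_rel_no_isolated hm) hn.
rewrite !card_ord; lia.
Qed.
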